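(* Let $n$ and $0<n_1<\cdots<n_d<n$ be integers with $m_1=n_1$, $m_k=n_k-n_{k-1}$ ($2\le k\le d$), $m_{d+1}=n-n_d$, and equip $\mathrm{Flag}(n_1,\dots,n_d;n)=\{(VJ_1V^{\mathsf T},\dots,VJ_{d+1}V^{\mathsf T}):V\in\mathrm{O}(n)\}\subseteq(\mathbb{R}^{n\times n})^{d+1}$ with the metric induced by the Frobenius inner product. Let $V(t)$ be a differentiable curve in $\mathrm{O}(n)$ with $\Lambda(t)=V(t)^{\mathsf T}\dot V(t)$, $\Lambda(k,k)\equiv0$ ($k=1,\dots,d+1$), and $c(t)=V(t)(J_1,\dots,J_{d+1})V(t)^{\mathsf T}$. Let $Y(t)=V(t)\big(X(t)J_1-J_1X(t),\dots,X(t)J_{d+1}-J_{d+1}X(t)\big)V(t)^{\mathsf T}$ with $X(t)\in\mathfrak{so}(n)$ differentiable and $X(k,k)\equiv0$. Then $Y$ is parallel along $c$ if and only if \[ \dot X(t)=\tfrac12\,\pi\big([X(t),\Lambda(t)]\big). \]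
   Context: $J_k=\operatorname{diag}(-I_{m_1},\dots,-I_{m_{k-1}},I_{m_k},-I_{m_{k+1}},\dots,-I_{m_{d+1}})$ for $k=1,\dots,d+1$. $V(M_1,\dots,M_{d+1})V^{\mathsf T}$ denotes $(VM_1V^{\mathsf T},\dots,VM_{d+1}V^{\mathsf T})$. For an $n\times n$ matrix $M$, $M(p,q)$ denotes its $(p,q)$ block in the partition $n=m_1+\cdots+m_{d+1}$; for $M\in\mathfrak{so}(n)$, $\pi(M)$ is obtained by setting all diagonal blocks $M(p,p)$ to zero; $[X,\Lambda]=X\Lambda-\Lambda X$. $Y$ is parallel along $c$ iff the orthogonal projection of $\dot Y(t)$ onto $\mathbb{T}_{c(t)}\mathrm{Flag}$ vanishes for all $t$. *)

From HB Require Import structures.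
From mathcomp Require Import all_boot all_order all_algebra.
From mathcomp Require Import all_classical all_reals all_analysis.
Unset Printing Implicit Defensive.
Import Order.TTheory GRing.Theory Num.Theory.
Local Open Scope ring_scope.


(* The partition n = m_1 + ... + m_(d+1) is given by ns = [:: n_1; ...; n_d].
   blk ns i (0-based, in 0..d) = number of n_j with n_j <= i, i.e. the block
   containing index i (block k+1 of the paper corresponds to blk = k). *)
Definition blk (ns : seq nat) (n : nat) (i : 'I_n) : nat :=
  count (fun a => (a <= i)%N) ns.

(* J_k (k : 'I_(d+1) is the 0-based index of the paper's J_(k+1)) *)
Definition Jmat (R : realType) (ns : seq nat) (n : nat) (k : 'I_(size ns).+1) : 'M[R]_n :=
  \matrix_(i, j) (if i == j then (if blk ns n i == k :> nat then 1 else -1) else 0).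

Definition piblk (R : realType) (ns : seq nat) (n : nat) (M : 'M[R]_n) : 'M[R]_n :=
  \matrix_(i, j) (if blk ns n i == blk ns n j then 0 else M i j).

Definition orthogonal_mx (R : realType) (n : nat) (V : 'M[R]_n) : Prop := V *m V^T = 1%:M.

Definition skew_mx (R : realType) (n : nat) (X : 'M[R]_n) : Prop := X^T = - X.

Definition frob (R : realType) (n : nat) (A B : 'M[R]_n) : R := \sum_i \sum_j A i j * B i j.

Definition frob_tuple (R : realType) (d n : nat) (A B : 'I_d.+1 -> 'M[R]_n) : R :=
  \sum_k frob R n (A k) (B k).

Definition in_Flag (R : realType) (ns : seq nat) (n : nat) (P : 'I_(size ns).+1 -> 'M[R]_n) : Prop :=
  exists V : 'M[R]_n, orthogonal_mx R n V /\
    forall k, P k = V *m Jmat R ns n k *m V^T.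

Definition tangent_Flag (R : realType) (ns : seq nat) (n : nat) (P : 'I_(size ns).+1 -> 'M[R]_n)
  (W : 'I_(size ns).+1 -> 'M[R]_n) : Prop :=
  exists g : 'I_(size ns).+1 -> R -> 'M[R]_n,
    [/\ forall k s, derivable (g k) s 1,
        forall s, in_Flag R ns n (fun k => g k s),
        forall k, g k 0 = P k &
        forall k, W k = derive1 (g k) 0].

(* Y is parallel along c: the orthogonal projection of dY/dt(t) onto
   T_{c(t)} Flag vanishes for all t, i.e. dY/dt(t) is Frobenius-orthogonal to
   every tangent vector at c(t). *)
Definition parallel_along (R : realType) (ns : seq nat) (n : nat)
  (c Y : R -> 'I_(size ns).+1 -> 'M[R]_n) : Prop :=
  forall t (W : 'I_(size ns).+1 -> 'M[R]_n),
    tangent_Flag R ns n (c t) W ->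
    frob_tuple R (size ns) n (fun k => derive1 (fun s => Y s k) t) W = 0.

From HB Require Import structures.
From mathcomp Require Import all_boot all_order all_algebra.
From mathcomp Require Import all_classical all_reals all_analysis.
From mathcomp Require Import ring lra.
Import Order.TTheory GRing.Theory Num.Theory numFieldNormedType.Exports.
Local Open Scope ring_scope.

(* Pull everything back to the base point (J_1, ..., J_(d+1)) by V(t).  With
   L = V^T V', which is skew, the pulled-back derivative of Y_k is
   M_k = [X', J_k] + [L, [X, J_k]].  Differentiating J_k^2 = 1 and
   (J_k + 1)(J_l + 1) = 0 (k <> l) along a curve in Flag shows that a
   pulled-back tangent vector W has W_k(i,j) = 0 unless exactly one of i, j lies
   in block k, and W_(blk i)(i,j) = - W_(blk j)(i,j).  So the pairing of Y' with
   W only sees, for i and j in different blocks, M_(blk j)(i,j) - M_(blk i)(i,j),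
   which is 2 (2X' + [L, X])(i,j) because L and X vanish on the diagonal blocks.
   Hence Y is parallel iff the off-diagonal blocks of 2X' + [L, X] are
   orthogonal to all pulled-back tangent vectors; the rotations in the
   (i,j)-planes are tangent, so this happens iff those blocks vanish, which is
   the formula. *)

Section MatrixCurves.
Context {R : realFieldType} {U : normedModType R}.

Lemma is_derive_mxP m p (F : U -> 'M[R]_(m, p)) x v dF :
  is_derive x v F dF <-> forall i j, is_derive x v (fun y => F y i j) (dF i j).
Proof.
split=> [[dFx <-] i j | dFij].
  apply: DeriveDef; first exact: (derivable_mxP F x v).1 dFx i j.
  by rewrite derive_mx // mxE.
have dFx : derivable F x v by apply/derivable_mxP => i j; exact: ex_derive.
by apply: DeriveDef; rewrite // derive_mx //; apply/matrixP => i j; rewrite mxE derive_val.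
Qed.

Global Instance is_derive_mulmx {m p q}
    {F : U -> 'M[R]_(m, p)} {G : U -> 'M[R]_(p, q)} {x v dF dG} :
  is_derive x v F dF -> is_derive x v G dG ->
  is_derive x v (fun y => F y *m G y) (dF *m G x + F x *m dG).
Proof.
move=> /is_derive_mxP dFij /is_derive_mxP dGij; apply/is_derive_mxP => i j.
have -> : (fun y => (F y *m G y) i j) = \sum_l ((fun y => F y i l) * (fun y => G y l j)).
  by apply/funext => y; rewrite mxE fct_sumE.
apply: is_derive_eq; rewrite !mxE -big_split; apply: eq_bigr => l _ /=.
by rewrite addrC; congr (_ + _); exact: mulrC.
Qed.

Global Instance is_derive_trmx {m p} {F : U -> 'M[R]_(m, p)} {x v dF} :
  is_derive x v F dF -> is_derive x v (fun y => (F y)^T) dF^T.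
Proof.
move=> /is_derive_mxP dFij; apply/is_derive_mxP => i j.
by under eq_fun do rewrite mxE; rewrite mxE.
Qed.

Global Instance is_derive_scalemx m p (f : U -> R) (B : 'M[R]_(m, p)) x v df :
  is_derive x v f df -> is_derive x v (fun y => f y *: B) (df *: B).
Proof.
move=> dfx; apply/is_derive_mxP => i j.
under eq_fun do rewrite mxE.
by rewrite mxE; apply: is_derive_eq; rewrite scaler0 add0r mulrC.
Qed.

Lemma is_derive_constant {W : normedModType R} {f : U -> W} {x v df} :
  is_derive x v f df -> (forall y, f y = f x) -> df = 0.
Proof.
move=> [_ <-] fC.
by rewrite (_ : f = cst (f x)) ?derive_cst //; exact/funext.
Qed.

Lemma is_derive_skew {n} {P : U -> 'M[R]_n} {x v dP} :
  is_derive x v P dP -> (forall y, (P y)^T = - P y) -> dP^T = - dP.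
Proof.
move=> dPx Pskew; apply/eqP; rewrite -addr_eq0; apply/eqP.
apply: is_derive_constant (is_deriveD (is_derive_trmx dPx) dPx) _ => y.
by rewrite !fctE !Pskew !addNr.
Qed.

Lemma orthogonal_curve_skew {n} {P : U -> 'M[R]_n} {x v dP} :
  is_derive x v P dP -> (forall y, (P y)^T *m P y = 1%:M) ->
  ((P x)^T *m dP)^T = - ((P x)^T *m dP).
Proof.
move=> dPx PTP; apply/eqP; rewrite -addr_eq0 trmx_mul trmxK; apply/eqP.
apply: is_derive_constant (is_derive_mulmx (is_derive_trmx dPx) dPx) _ => y.
by rewrite !PTP.
Qed.

Lemma is_derive_conjmx {n} {P K : U -> 'M[R]_n} {x v L dK} :
  L^T = - L -> is_derive x v P (P x *m L) -> is_derive x v K dK ->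
  is_derive x v (fun y => P y *m K y *m (P y)^T)
    (P x *m (dK + L *m K x - K x *m L) *m (P x)^T).
Proof.
move=> Lskew dPx dKx; apply: is_derive_eq => /=.
rewrite trmx_mul Lskew !(mulmxDr, mulmxDl, mulmxN, mulNmx, mulmxA).
by rewrite [P x *m L *m K x *m _ + _]addrC.
Qed.

End MatrixCurves.

Definition mxcomm {R : pzRingType} {n} (A B : 'M[R]_n) := A *m B - B *m A.

Lemma mxcommE {R : pzRingType} {n} (A B : 'M[R]_n) i j :
  mxcomm A B i j = \sum_k (A i k * B k j - B i k * A k j).
Proof. by rewrite /mxcomm !mxE sumrB. Qed.

Lemma mxcomm_skew {R : comPzRingType} {n} {A B : 'M[R]_n} :
  A^T = - A -> B^T = - B -> (mxcomm A B)^T = - mxcomm A B.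
Proof.
by move=> AT BT; rewrite /mxcomm linearB /= !trmx_mul AT BT !mulmxN !mulNmx !opprK opprB.
Qed.

Section Frobenius.
Variables (R : realType) (n : nat).
Local Notation frob := (frob R n).

Lemma frob_conjmx (U A B : 'M[R]_n) : U^T *m U = 1%:M ->
  frob (U *m A *m U^T) (U *m B *m U^T) = frob A B.
Proof.
have frob_tr (C D : 'M[R]_n) : frob C D = \tr (C *m D^T).
  by apply: eq_bigr => i _; rewrite mxE; apply: eq_bigr => j _; rewrite mxE.
move=> UTU; rewrite !frob_tr !trmx_mul !trmxK -!mulmxA (mulmxA U^T U) UTU mul1mx.
by rewrite mxtrace_mulC -!mulmxA UTU mulmx1.
Qed.

Lemma frob0l (B : 'M[R]_n) : frob 0 B = 0.
Proof. by rewrite /frob big1 // => i _; apply: big1 => j _; rewrite mxE mul0r. Qed.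

Lemma frobZl a (A B : 'M[R]_n) : frob (a *: A) B = a * frob A B.
Proof.
rewrite /frob mulr_sumr; apply: eq_bigr => i _; rewrite mulr_sumr.
by apply: eq_bigr => j _; rewrite mxE mulrA.
Qed.

Lemma frobZr a (A B : 'M[R]_n) : frob A (a *: B) = a * frob A B.
Proof.
rewrite /frob mulr_sumr; apply: eq_bigr => i _; rewrite mulr_sumr.
by apply: eq_bigr => j _; rewrite mxE mulrCA.
Qed.

Lemma frobBr (A B C : 'M[R]_n) : frob A (B - C) = frob A B - frob A C.
Proof.
rewrite /frob -sumrB; apply: eq_bigr => i _; rewrite -sumrB.
by apply: eq_bigr => j _; rewrite !mxE mulrBr.
Qed.

Lemma frob_delta (A : 'M[R]_n) i j : frob A (delta_mx i j) = A i j.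
Proof.
rewrite /frob (bigD1 i) //= (bigD1 j) //= mxE !eqxx mulr1.
rewrite [X in _ + X + _]big1 => [|l lj]; last by rewrite mxE (negbTE lj) andbF mulr0.
rewrite big1 ?addr0 // => k ki.
by apply: big1 => l _; rewrite mxE (negbTE ki) mulr0.
Qed.

End Frobenius.

Section Conjugation.
Variables (R : comPzRingType) (n : nat) (U : 'M[R]_n).

Lemma mulmx_conj (A B : 'M[R]_n) : U^T *m U = 1%:M ->
  U *m A *m U^T *m (U *m B *m U^T) = U *m (A *m B) *m U^T.
Proof. by move=> UTU; rewrite !mulmxA -(mulmxA _ U^T) UTU mulmx1. Qed.

Lemma addmx_conj1 (A : 'M[R]_n) : U *m U^T = 1%:M ->
  U *m A *m U^T + 1%:M = U *m (A + 1%:M) *m U^T.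
Proof. by move=> UUT; rewrite mulmxDr mulmx1 mulmxDl UUT. Qed.

End Conjugation.

Section RotationCurve.
Context {R : realType} {n : nat}.
Variable A : 'M[R]_n.

(* Rodrigues' formula: exp (t A) when A is skew with A^3 = -A. *)
Definition rotation_curve (t : R) : 'M[R]_n :=
  1%:M + (1 - cos t) *: (A *m A) + sin t *: A.

Lemma rotation_curve0 : rotation_curve 0 = 1%:M.
Proof. by rewrite /rotation_curve cos0 sin0 subrr !scale0r !addr0. Qed.

Hypothesis A3 : A *m A *m A = - A.

Lemma rotation_curve_orthogonal t : A^T = - A ->
  rotation_curve t *m (rotation_curve t)^T = 1%:M.
Proof.
move=> AT; set B := A *m A.
have BT : B^T = B by rewrite trmx_mul AT mulmxN mulNmx opprK.
have AB : A *m B = - A by rewrite mulmxA.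
have BA : B *m A = - A by [].
have BB : B *m B = - B by rewrite mulmxA A3 mulNmx.
have -> : rotation_curve t *m (rotation_curve t)^T =
    1%:M + (1 - (cos t ^+ 2 + sin t ^+ 2)) *: B.
  have GT : (rotation_curve t)^T = 1%:M + (1 - cos t) *: B - sin t *: A.
    rewrite /rotation_curve [LHS]linearD [X in X + _]linearD /= !linearZ /=.
    by rewrite trmx1 BT AT scalerN.
  rewrite GT /rotation_curve -/B !mulmxDl !mulmxDr !mul1mx !mulmx1 !mulmxN.
  rewrite -!scalemxAl -!scalemxAr AB BA BB -/B.
  clearbody B; apply/matrixP => i j; rewrite !mxE; ring.
by rewrite cos2Dsin2 subrr scale0r addr0.
Qed.

Lemma is_derive_rotation_curve (t : R) :
  is_derive t 1 rotation_curve (rotation_curve t *m A).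
Proof.
apply: is_derive_eq; rewrite /rotation_curve !mulmxDl mul1mx -!scalemxAl A3.
set B := A *m A; clearbody B; apply/matrixP => i j; rewrite !mxE; ring.
Qed.

End RotationCurve.

Section FlagTangent.
Variables (R : realType) (ns : seq nat) (n : nat).
Local Notation d := (size ns).
Local Notation J := (Jmat R ns n).

Lemma blk_lt_size (i : 'I_n) : (blk ns n i < d.+1)%N.
Proof. by rewrite ltnS /blk count_size. Qed.

Definition blk_ord (i : 'I_n) : 'I_d.+1 := Ordinal (blk_lt_size i).

Lemma eq_blk_ord i j : (blk_ord i == blk_ord j) = (blk ns n i == blk ns n j).
Proof. by []. Qed.

Definition jsign (k : 'I_d.+1) (i : 'I_n) : R := if blk_ord i == k then 1 else -1.

Lemma jsign_blk i : jsign (blk_ord i) i = 1.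
Proof. by rewrite /jsign eqxx. Qed.

Lemma jsign_other {k i} : k != blk_ord i -> jsign k i = -1.
Proof. by rewrite /jsign eq_sym => /negbTE ->. Qed.

Lemma Jmat_diag k : J k = diag_mx (\row_i jsign k i).
Proof. by apply/matrixP => i j; rewrite !mxE; case: eqP. Qed.

Lemma mulmxJ (A : 'M[R]_n) k i j : (A *m J k) i j = A i j * jsign k j.
Proof. by rewrite Jmat_diag mul_mx_diag !mxE. Qed.

Lemma mulJmx (A : 'M[R]_n) k i j : (J k *m A) i j = jsign k i * A i j.
Proof. by rewrite Jmat_diag mul_diag_mx !mxE. Qed.

Lemma mxcommJ (A : 'M[R]_n) k i j :
  mxcomm A (J k) i j = A i j * (jsign k j - jsign k i).
Proof. rewrite /mxcomm [LHS]mxE [X in _ + X]mxE mulmxJ mulJmx; ring. Qed.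

Lemma Jmat_sqr k : J k *m J k = 1%:M.
Proof.
apply/matrixP => i j; rewrite mulJmx Jmat_diag !mxE.
by case: eqP; rewrite ?mulr0 // /jsign; case: ifP; rewrite ?mulr1 ?mulrNN ?mulr1.
Qed.

Lemma Jmat_shift_mul k l : k != l -> (J k + 1%:M) *m (J l + 1%:M) = 0.
Proof.
move=> kl; apply/matrixP => i j.
rewrite mulmxDl mul1mx [LHS]mxE mulJmx Jmat_diag !mxE.
case: eqP => _ /=; last by rewrite mulr0n add0r mulr0 addr0.
rewrite mulr1n.
have [kb | ki] := eqVneq k (blk_ord i).
  have li : l != blk_ord i by rewrite -kb eq_sym.
  by rewrite kb jsign_blk (jsign_other li); ring.
by rewrite (jsign_other ki); ring.
Qed.

Lemma in_Flag_eqs {P} : in_Flag R ns n P ->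
  (forall k, P k *m P k = 1%:M) /\
  (forall k l, k != l -> (P k + 1%:M) *m (P l + 1%:M) = 0).
Proof.
case=> U [UUT PE]; have UTU := mulmx1C UUT.
split=> [k | k l kl]; rewrite !PE; first by rewrite mulmx_conj // Jmat_sqr mulmx1.
by rewrite !addmx_conj1 // mulmx_conj // Jmat_shift_mul // mulmx0 mul0mx.
Qed.

Lemma tangent_Flag_eqs P W : tangent_Flag R ns n P W ->
  (forall k, W k *m P k + P k *m W k = 0) /\
  (forall k l, k != l -> W k *m (P l + 1%:M) + (P k + 1%:M) *m W l = 0).
Proof.
case=> g [gd gF g0 gW].
have dg k : is_derive (0 : R) 1 (g k) (W k) by rewrite gW derive1E; exact: derivableP.
split=> [k | k l kl]; rewrite -!g0.
  apply: is_derive_constant (is_derive_mulmx (dg k) (dg k)) _ => s.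
  by rewrite !(in_Flag_eqs (gF _)).1.
have : is_derive (0 : R) 1 (fun s => (g k s + 1%:M) *m (g l s + 1%:M))
    (W k *m (g l 0 + 1%:M) + (g k 0 + 1%:M) *m W l).
  by apply: is_derive_eq; rewrite !addr0.
move/is_derive_constant; apply=> s.
by rewrite !(in_Flag_eqs (gF _)).2.
Qed.

(* The entrywise content of the linearised relations J_k^2 = 1 and
   (J_k + 1)(J_l + 1) = 0 (k <> l), see tangent_Flag_eqs. *)
Definition base_tangent (W : 'I_d.+1 -> 'M[R]_n) : Prop :=
  (forall k i j, jsign k i = jsign k j -> W k i j = 0) /\
  (forall i j, blk_ord i != blk_ord j -> W (blk_ord i) i j = - W (blk_ord j) i j).

Lemma base_tangent_of_eqs W :
  (forall k, W k *m J k + J k *m W k = 0) ->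
  (forall k l, k != l -> W k *m (J l + 1%:M) + (J k + 1%:M) *m W l = 0) ->
  base_tangent W.
Proof.
move=> anti shift; split=> [k i j eqij | i j ij].
  have /matrixP/(_ i j) := anti k.
  rewrite [LHS]mxE mulmxJ mulJmx [RHS]mxE -eqij /jsign.
  by case: ifP => _; lra.
have /matrixP/(_ i j) := shift _ _ ij.
rewrite mulmxDr mulmx1 mulmxDl mul1mx [LHS]mxE [X in X + _]mxE [X in _ + X]mxE.
by rewrite mulmxJ mulJmx [RHS]mxE !jsign_blk; lra.
Qed.

Lemma tangent_Flag_conj {U P W} : U *m U^T = 1%:M -> tangent_Flag R ns n P W ->
  tangent_Flag R ns n (fun k => U *m P k *m U^T) (fun k => U *m W k *m U^T).
Proof.
move=> UUT [g [gd gF g0 gW]].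
have dg k (s : R) : is_derive s 1 (g k) (derive1 (g k) s).
  by rewrite derive1E; exact: derivableP.
exists (fun k s => U *m g k s *m U^T); split=> [k s | s | k | k].
- by apply: ex_derive; apply: is_derive_eq.
- have [V [VVT gV]] := gF s; exists (U *m V); split=> [|k].
    by rewrite /orthogonal_mx trmx_mul mulmxA -(mulmxA U) VVT mulmx1.
  by rewrite gV trmx_mul !mulmxA.
- by rewrite g0.
- by rewrite derive1E derive_val gW mul0mx add0r mulmx0 addr0.
Qed.

Lemma tangent_Flag_base_tangent U W : U *m U^T = 1%:M ->
  tangent_Flag R ns n (fun k => U *m J k *m U^T) W ->
  base_tangent (fun k => U^T *m W k *m U).
Proof.
move=> UUT; have UTU : U^T *m U^T^T = 1%:M by rewrite trmxK mulmx1C.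
move/(tangent_Flag_conj UTU); rewrite trmxK.
have -> : (fun k => U^T *m (U *m J k *m U^T) *m U) = J.
  apply/funext => k.
  by rewrite !mulmxA (mulmx1C UUT) mul1mx -mulmxA (mulmx1C UUT) mulmx1.
by case/tangent_Flag_eqs; exact: base_tangent_of_eqs.
Qed.

Lemma tangent_Flag_rotation {r s} : r != s ->
  tangent_Flag R ns n J (fun k => mxcomm (delta_mx r s - delta_mx s r) (J k)).
Proof.
move=> rs; set A := delta_mx r s - delta_mx s r.
have sr : s != r by rewrite eq_sym.
have AT : A^T = - A by rewrite /A linearB /= !trmx_delta opprB.
have A3 : A *m A *m A = - A.
  rewrite /A !mulmxBl !mulmxBr !mul_delta_mx !mul_delta_mx_0 // sub0r subr0.
  by rewrite !mulNmx !mul_delta_mx !mul_delta_mx_0 // oppr0 subr0 sub0r opprK opprB addrC.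
have dG k (t : R) :
    is_derive t 1 (fun u => rotation_curve A u *m J k *m (rotation_curve A u)^T)
      (rotation_curve A t *m (0 + A *m J k - J k *m A) *m (rotation_curve A t)^T).
  exact: is_derive_conjmx AT (is_derive_rotation_curve _ A3 t) (is_derive_cst (J k) t 1).
exists (fun k t => rotation_curve A t *m J k *m (rotation_curve A t)^T).
split=> [k t | t | k | k].
- by case: (dG k t).
- by exists (rotation_curve A t); split=> //; exact: rotation_curve_orthogonal.
- by rewrite rotation_curve0 trmx1 mulmx1 mul1mx.
- rewrite derive1E; case: (dG k 0) => _ ->.
  by rewrite rotation_curve0 trmx1 mul1mx mulmx1 add0r.
Qed.

Lemma jsign_eq k i j : blk_ord i = blk_ord j -> jsign k i = jsign k j.
Proof. by rewrite /jsign => ->. Qed.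

(* For a base tangent vector W, this matrix records W completely. *)
Definition blk_collapse (W : 'I_d.+1 -> 'M[R]_n) : 'M[R]_n :=
  \matrix_(i, j) W (blk_ord j) i j.

Lemma frob_sum_base_tangent (M W : 'I_d.+1 -> 'M[R]_n) : base_tangent W ->
  \sum_k frob R n (M k) (W k) =
  frob R n (piblk R ns n (\matrix_(i, j) (M (blk_ord j) i j - M (blk_ord i) i j)))
    (blk_collapse W).
Proof.
case=> W0 Wanti; rewrite /frob exchange_big; apply: eq_bigr => i _.
rewrite exchange_big; apply: eq_bigr => j _; rewrite !mxE -eq_blk_ord.
have [ij | ij] := eqVneq (blk_ord i) (blk_ord j).
  by rewrite mul0r big1 // => k _; rewrite W0 ?mulr0 //; exact: jsign_eq.
have ji : blk_ord j != blk_ord i by rewrite eq_sym.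
rewrite (bigD1 (blk_ord j)) // (bigD1 (blk_ord i)) //=.
rewrite big1 ?addr0 => [|k /andP[kj ki]].
  by rewrite Wanti //; ring.
by rewrite W0 ?mulr0 // (jsign_other ki) (jsign_other kj).
Qed.

Lemma piblkE (A : 'M[R]_n) i j :
  piblk R ns n A i j = if blk ns n i == blk ns n j then 0 else A i j.
Proof. by rewrite mxE. Qed.

Definition blk_offdiag (A : 'M[R]_n) : Prop :=
  forall i j, blk ns n i = blk ns n j -> A i j = 0.

(* V^T Y_k' V for Y_k = V [X, J_k] V^T, where L = V^T V' and X' is the
   derivative of X. *)
Definition base_derivative (L X X' : 'M[R]_n) k :=
  mxcomm X' (J k) + mxcomm L (mxcomm X (J k)).

Lemma piblk_base_derivative L X X' : blk_offdiag L -> blk_offdiag X ->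
  piblk R ns n (\matrix_(i, j)
    (base_derivative L X X' (blk_ord j) i j -
     base_derivative L X X' (blk_ord i) i j)) =
  2 *: piblk R ns n (2 *: X' + mxcomm L X).
Proof.
move=> L0 X0; apply/matrixP => i j.
rewrite [RHS]mxE !piblkE -eq_blk_ord.
have [_ | ij] := eqVneq (blk_ord i) (blk_ord j); first by rewrite mulr0.
rewrite [LHS]mxE [X in _ * X]mxE.
have ji : blk_ord j != blk_ord i by rewrite eq_sym.
have entry k : base_derivative L X X' k i j = X' i j * (jsign k j - jsign k i) +
    \sum_u (L i u * X u j * (jsign k j - jsign k u) -
            X i u * L u j * (jsign k u - jsign k i)).
  rewrite /base_derivative [LHS]mxE mxcommJ mxcommE; congr (_ + _).
  by apply: eq_bigr => u _; rewrite !mxcommJ; ring.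
rewrite !entry !jsign_blk (jsign_other ij) (jsign_other ji).
rewrite opprD addrACA -sumrB mxcommE.
rewrite [(2 *: X') i j]mxE [in RHS]mulrDr mulr_sumr; congr (_ + _); first ring.
apply: eq_bigr => u _.
have [/(congr1 val) iu | iu] := eqVneq (blk_ord i) (blk_ord u).
  by rewrite (L0 i u iu) (X0 i u iu); ring.
have [/(congr1 val) uj | uj] := eqVneq (blk_ord j) (blk_ord u).
  by rewrite (L0 u j (esym uj)) (X0 u j (esym uj)); ring.
by rewrite (jsign_other iu) (jsign_other uj); ring.
Qed.

Lemma blk_collapse_comm (A : 'M[R]_n) :
  blk_collapse (fun k => mxcomm A (J k)) = 2 *: piblk R ns n A.
Proof.
apply/matrixP => i j.
rewrite [LHS]mxE [RHS]mxE piblkE mxcommJ jsign_blk -eq_blk_ord.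
have [ij | ji] := eqVneq (blk_ord i) (blk_ord j).
  by rewrite -ij jsign_blk subrr !mulr0.
by rewrite eq_sym in ji; rewrite (jsign_other ji); ring.
Qed.

Lemma frob_piblk (M N : 'M[R]_n) :
  frob R n (piblk R ns n M) (piblk R ns n N) = frob R n (piblk R ns n M) N.
Proof.
apply: eq_bigr => i _; apply: eq_bigr => j _.
by rewrite !piblkE; case: ifP; rewrite ?mul0r.
Qed.

End FlagTangent.

Section ParallelTransport.
Context {R : realType} {ns : seq nat} {n : nat} {V X : R -> 'M[R]_n}.
Local Notation J := (Jmat R ns n).
Implicit Types t : R.
Hypotheses (V_orth : forall t, orthogonal_mx R n (V t))
  (V_der : forall t, derivable V t 1)
  (Lam_offdiag : forall t, blk_offdiag R ns n ((V t)^T *m derive1 V t))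
  (X_skew : forall t, skew_mx R n (X t))
  (X_der : forall t, derivable X t 1)
  (X_offdiag : forall t, blk_offdiag R ns n (X t)).

Let Lam t := (V t)^T *m derive1 V t.
Let defect t := 2 *: derive1 X t + mxcomm (Lam t) (X t).

Lemma is_derive_V t : is_derive t 1 V (V t *m Lam t).
Proof. by rewrite /Lam mulmxA V_orth mul1mx derive1E; exact: derivableP. Qed.

Lemma Lam_skew t : (Lam t)^T = - Lam t.
Proof.
rewrite /Lam derive1E; apply: orthogonal_curve_skew (derivableP (V_der t)) _ => s.
exact/mulmx1C/V_orth.
Qed.

Lemma derive_Y t k :
  derive1 (fun s => V s *m mxcomm (X s) (J k) *m (V s)^T) t =
  V t *m base_derivative R ns n (Lam t) (X t) (derive1 X t) k *m (V t)^T.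
Proof.
have dX : is_derive t 1 X (derive1 X t) by rewrite derive1E; exact: derivableP.
have dK : is_derive t 1 (fun s => mxcomm (X s) (J k)) (mxcomm (derive1 X t) (J k)).
  by apply: is_derive_eq; rewrite mulmx0 mul0mx addr0 add0r.
rewrite derive1E; case: (is_derive_conjmx (Lam_skew t) (is_derive_V t) dK) => _ ->.
by rewrite /base_derivative /mxcomm addrA.
Qed.

Lemma frob_derive_Y {t W} :
  tangent_Flag R ns n (fun k => V t *m J k *m (V t)^T) W ->
  frob_tuple R (size ns) n
    (fun k => derive1 (fun s => V s *m mxcomm (X s) (J k) *m (V s)^T) t) W =
  2 * frob R n (piblk R ns n (defect t))
        (blk_collapse R ns n (fun k => (V t)^T *m W k *m V t)).
Proof.
move=> tW; have VTV := mulmx1C (V_orth t).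
have WE k : W k = V t *m ((V t)^T *m W k *m V t) *m (V t)^T.
  by rewrite !mulmxA V_orth mul1mx -mulmxA V_orth mulmx1.
rewrite /frob_tuple; under eq_bigr => k _ do rewrite derive_Y [W k]WE frob_conjmx //.
rewrite frob_sum_base_tangent; last exact: tangent_Flag_base_tangent (V_orth t) tW.
by rewrite piblk_base_derivative ?frobZl //; exact: Lam_offdiag.
Qed.

Lemma derive_X_offdiag t : blk_offdiag R ns n (derive1 X t).
Proof.
move=> i j ij; have /is_derive_mxP/(_ i j) := derivableP (X_der t).
by rewrite -derive1E => /is_derive_constant; apply=> s; rewrite !X_offdiag.
Qed.

Lemma defect_skew t : (defect t)^T = - defect t.
Proof.
have X'_skew : (derive1 X t)^T = - (derive1 X t : 'M[R]_n).
  by rewrite derive1E; exact: is_derive_skew (derivableP (X_der t)) X_skew.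
rewrite /defect [LHS]linearD /= linearZ /= X'_skew.
by rewrite (mxcomm_skew (Lam_skew t) (X_skew t)) scalerN [RHS]opprD.
Qed.

Lemma formula_iff_defect t :
  derive1 X t = 2^-1 *: piblk R ns n (X t *m Lam t - Lam t *m X t) <->
  piblk R ns n (defect t) = 0.
Proof.
have -> : piblk R ns n (defect t) =
    2 *: (derive1 X t - 2^-1 *: piblk R ns n (X t *m Lam t - Lam t *m X t)).
  apply/matrixP => i j; rewrite !mxE.
  case: eqP => [ij | _]; last by field.
  by rewrite derive_X_offdiag //; ring.
split=> [-> | /eqP]; first by rewrite subrr scaler0.
by rewrite scaler_eq0 pnatr_eq0 subr_eq0 => /eqP.
Qed.

Lemma parallel_piblk_defect :
  parallel_along R ns n (fun t k => V t *m J k *m (V t)^T)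
    (fun t k => V t *m mxcomm (X t) (J k) *m (V t)^T) ->
  forall t, piblk R ns n (defect t) = 0.
Proof.
move=> par t; apply/matrixP => r s.
rewrite piblkE [RHS]mxE; case: eqP => // /eqP rs_blk.
have rs : r != s by apply: contra_neq rs_blk => ->.
have tW := tangent_Flag_conj R ns n (V_orth t) (tangent_Flag_rotation R ns n rs).
have := par t _ tW; rewrite frob_derive_Y //; set A := delta_mx r s - delta_mx s r.
have -> : (fun k => (V t)^T *m (V t *m mxcomm A (J k) *m (V t)^T) *m V t) =
    (fun k => mxcomm A (J k)).
  apply/funext => k; have VTV := mulmx1C (V_orth t).
  by rewrite !mulmxA VTV mul1mx -mulmxA VTV mulmx1.
rewrite blk_collapse_comm frobZr frob_piblk frobBr !frob_delta !piblkE.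
have /matrixP/(_ r s) := defect_skew t; rewrite [LHS]mxE [RHS]mxE => skew_rs.
by rewrite (negbTE rs_blk) eq_sym (negbTE rs_blk) skew_rs; lra.
Qed.

End ParallelTransport.

Theorem propositionB2 (R : realType) (n : nat) (ns : seq nat)
  (Hd : (0 < size ns)%N)
  (Hns : sorted ltn (0%N :: rcons ns n))
  (V X : R -> 'M[R]_n)
  (HVorth : forall t, orthogonal_mx R n (V t))
  (HVdiff : forall t, derivable V t 1)
  (HLam : forall t (i j : 'I_n), blk ns n i = blk ns n j ->
            ((V t)^T *m derive1 V t) i j = 0)
  (HXskew : forall t, skew_mx R n (X t))
  (HXdiff : forall t, derivable X t 1)
  (HXblk : forall t (i j : 'I_n), blk ns n i = blk ns n j -> X t i j = 0) :
  let Lam := fun t => (V t)^T *m derive1 V t in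
  let c := fun t (k : 'I_(size ns).+1) => V t *m Jmat R ns n k *m (V t)^T in
  let Y := fun t (k : 'I_(size ns).+1) =>
             V t *m (X t *m Jmat R ns n k - Jmat R ns n k *m X t) *m (V t)^T in
  parallel_along R ns n c Y <->
  (forall t, derive1 X t = 2^-1 *: piblk R ns n (X t *m Lam t - Lam t *m X t)).
Proof.
move=> Lam c Y; split=> [par t | formula t W tW].
  apply/(formula_iff_defect HXdiff HXblk).
  exact: parallel_piblk_defect HVorth HVdiff HLam HXskew HXdiff HXblk par t.
rewrite (frob_derive_Y HVorth HVdiff HLam HXdiff HXblk tW).
by rewrite (formula_iff_defect HXdiff HXblk t).1 // frob0l mulr0.
Qed.
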